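(* Let $W$ be a finite-dimensional complex vector space and let $\mathcal{B}$ be a finite set of linear subspaces of $W$, equipped with a linear order. Suppose $\mathcal{B}$ contains two distinct subspaces $u,v$ with $u\subset v$, and let $\mathcal{B}'=\mathcal{B}\setminus\{u\}$ with the induced linear order. Then the natural inclusion $D(\mathcal{B}')\hookrightarrow D(\mathcal{B})$ is a quasi-isomorphism of cochain complexes (it induces an isomorphism on cohomology).
   Context: For a finite set $\mathcal{C}$ of linear subspaces of a complex vector space $W$, equipped with a linear order, $D(\mathcal{C})$ denotes the following cochain complex over $\mathbb{Q}$. As a vector space it has basis all subsets $\sigma\subseteq\mathcal{C}$. Write $\vee\sigma=\bigcap_{x\in\sigma}x$ (with $\vee\emptyset=W$). The degree of $\sigma$ is $\deg\sigma=2\operatorname{codim}_W(\vee\sigma)-|\sigma|$. For $\sigma=\{x_{i_1},\dots,x_{i_r}\}$ listed in increasing order for the given linear order, the differential is $$d\sigma=\sum_{j\,:\,\vee(\sigma\setminus\{x_{i_j}\})=\vee\sigma}(-1)^j\,(\sigma\setminus\{x_{i_j}\}).$$ Here $\mathcal{C}$ need not satisfy any non-inclusion condition. For $\mathcal{C}'\subseteq\mathcal{C}$ with the induced order, $D(\mathcal{C}')$ is the subcomplex of $D(\mathcal{C})$ spanned by subsets of $\mathcal{C}'$. *)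

From HB Require Import structures.
From mathcomp Require Import all_boot all_algebra.
From mathcomp Require Import reals complex.
Set Implicit Arguments. Unset Strict Implicit. Unset Printing Implicit Defensive.
Import GRing.Theory Num.Theory.
Local Open Scope ring_scope.

(* A finite linearly ordered family C of subspaces of W is encoded as an
   (injective) map  C : 'I_n -> {vspace W};  the linear order is the order
   of the indices. *)

Section DComplex.
Variables (K : fieldType) (W : vectType K) (n : nat) (C : 'I_n -> {vspace W}).

Definition vee (s : {set 'I_n}) : {vspace W} := (\bigcap_(x in s) C x)%VS.

Definition codimW (s : {set 'I_n}) : nat := (\dim (fullv : {vspace W}) - \dim (vee s))%N.

Definition degD (s : {set 'I_n}) : int := (2 * codimW s)%:Z - #|s|%:Z.

(* 1-based position of x in sigma listed in increasing order *)
Definition posn (s : {set 'I_n}) (x : 'I_n) : nat := #|[set y in s | (y <= x)%N]|.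

(* coefficient of the basis element tau in d(sigma) *)
Definition dcoef (s t : {set 'I_n}) : rat :=
  \sum_(x in s | (t == s :\ x) && (vee (s :\ x) == vee s)) (-1) ^+ posn s x.

(* Elements of D(C): rational linear combinations of subsets of C,
   encoded by their coefficient functions. *)
Definition cochain := {ffun {set 'I_n} -> rat}.

Definition dD (f : cochain) : cochain :=
  [ffun t => \sum_(s : {set 'I_n}) f s * dcoef s t].

Definition homog (k : int) (f : cochain) : Prop :=
  forall s : {set 'I_n}, f s != 0 -> degD s = k.

(* f lies in the subcomplex D(C \ {C i}) spanned by subsets avoiding i *)
Definition avoids (i : 'I_n) (f : cochain) : Prop :=
  forall s : {set 'I_n}, i \in s -> f s = 0.

(* The inclusion D(C \ {C i}) -> D(C) induces an isomorphism on cohomology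
   in every degree k: the induced map H^k(D(C')) -> H^k(D(C)) is
   surjective (every k-cocycle of D(C) is cohomologous to a cocycle of D(C'))
   and injective (a k-cocycle of D(C') that is a coboundary in D(C) is a
   coboundary in D(C')). *)
Definition incl_quasi_iso (i : 'I_n) : Prop :=
  forall k : int,
    (forall z, homog k z -> dD z = 0 ->
       exists z' y, [/\ homog k z', avoids i z', dD z' = 0, homog (k - 1) y
                     & z = z' + dD y])
    /\
    (forall z, homog k z -> avoids i z -> dD z = 0 ->
       (exists y, homog (k - 1) y /\ z = dD y) ->
       exists y, [/\ homog (k - 1) y, avoids i y & z = dD y]).

End DComplex.

From HB Require Import structures.
From mathcomp Require Import all_boot all_algebra.
From mathcomp Require Import reals complex zify ring.
Set Implicit Arguments. Unset Strict Implicit. Unset Printing Implicit Defensive.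
Import GRing.Theory Num.Theory.
Local Open Scope ring_scope.

(* Since u is contained in v, for every sigma containing u the subspace v
   can be added to or removed from sigma without changing its intersection.
   Hence h(f)(sigma) = +-f(sigma \ v) for u, v in sigma (and 0 otherwise) is
   a chain homotopy of degree -1 with f = d h f + h d f on every sigma
   containing u.  Subtracting d h z from a cocycle z therefore kills its
   part involving u, and subtracting d h y from a primitive y of a cocycle
   of D(B') does the same to y, which gives surjectivity and injectivity on
   cohomology. *)

Lemma sum_antisym_eq0 (R : numDomainType) (I : finType) (F : I -> I -> R) :
  (forall x y, F x y = - F y x) -> \sum_x \sum_y F x y = 0.
Proof.
move=> Fanti; set S := \sum_x _.
have S_opp : S = - S.
  rewrite {2}/S exchange_big -sumrN; apply: eq_bigr => x _.
  by rewrite -sumrN; apply: eq_bigr => y _; apply: Fanti.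
by apply/eqP; move/eqP: S_opp; rewrite -subr_eq0 opprK -mulr2n mulrn_eq0.
Qed.

Lemma sign_leq_swap (R : pzRingType) n (x y : 'I_n) : x != y ->
  (-1) ^+ (x <= y)%N = - (-1) ^+ (y <= x)%N :> R.
Proof.
by rewrite -val_eqE; case: (ltngtP x y); rewrite ?expr0 ?expr1 ?opprK.
Qed.

Lemma ffunBE (aT : finType) (rT : zmodType) (f g : {ffun aT -> rT}) x :
  (f - g) x = f x - g x.
Proof. by rewrite !ffunE. Qed.

Section DComplexTheory.
Variables (K : fieldType) (W : vectType K) (n : nat) (C : 'I_n -> {vspace W}).
Implicit Types (x y : 'I_n) (t : {set 'I_n}) (f g : cochain n).

Lemma vee_setU1 x t : vee C (x |: t) = (C x :&: vee C t)%VS.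
Proof.
rewrite /vee; have [xt|xt] := boolP (x \in t); last by rewrite big_setU1.
by rewrite (setUidPr _) ?sub1set //; apply/esym/capv_idPr/(bigcapv_inf x).
Qed.

Lemma vee_setU1_eq x t : (vee C (x |: t) == vee C t) = (vee C t <= C x)%VS.
Proof.
by rewrite vee_setU1; apply/eqP/idP => [<-|/capv_idPr //]; apply: capvSl.
Qed.

Lemma vee_setU1_id x t : (vee C t <= C x)%VS -> vee C (x |: t) = vee C t.
Proof. by rewrite -vee_setU1_eq => /eqP. Qed.

Lemma vee_subv x t : x \in t -> (vee C t <= C x)%VS.
Proof. by move=> xt; apply: bigcapv_inf xt _. Qed.

Lemma posn_setU1 y t x :
  y \notin t -> posn (y |: t) x = (posn t x + (y <= x)%N)%N.
Proof.
move=> yt; rewrite /posn; have [yx|yx] := boolP (y <= x)%N.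
  have -> : [set z in y |: t | (z <= x)%N] = y |: [set z in t | (z <= x)%N].
    by apply/setP=> z; rewrite !inE; case: (eqVneq z y) => [->|].
  by rewrite cardsU1 inE (negbTE yt) addnC.
have -> : [set z in y |: t | (z <= x)%N] = [set z in t | (z <= x)%N].
  apply/setP=> z; rewrite !inE; case: (eqVneq z y) => [->|//].
  by rewrite (negbTE yt) (negbTE yx).
by rewrite addn0.
Qed.

Definition psign t x : rat := (-1) ^+ posn t x.

Lemma psign_setU1 y t x :
  y \notin t -> psign (y |: t) x = (-1) ^+ (y <= x)%N * psign t x.
Proof. by move=> yt; rewrite /psign posn_setU1 // exprD mulrC. Qed.

Lemma psign_setU1_self x t : x \notin t -> psign (x |: t) x = - psign t x.
Proof. by move=> xt; rewrite psign_setU1 // leqnn mulN1r. Qed.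

Lemma psign_sqr t x : psign t x * psign t x = 1.
Proof. by rewrite -expr2 /psign -exprM mulnC exprM sqrrN expr1n. Qed.

Lemma psign_swap x y t : x \notin t -> y \notin t -> x != y ->
  psign (x |: (y |: t)) x * psign (y |: t) y
    = - (psign (y |: (x |: t)) y * psign (x |: t) x).
Proof.
move=> xt yt xy.
have xyt : x \notin y |: t by rewrite !inE negb_or xy.
have yxt : y \notin x |: t by rewrite !inE negb_or eq_sym xy.
rewrite !psign_setU1 // !leqnn (sign_leq_swap _ xy); ring.
Qed.

Lemma dDE f t : dD C f t =
  \sum_(x | (x \notin t) && (vee C t <= C x)%VS) psign (x |: t) x * f (x |: t).
Proof.
rewrite ffunE /dcoef; under eq_bigr do rewrite big_distrr.
rewrite (exchange_big_dep xpredT) //= [RHS]big_mkcond; apply: eq_bigr => x _.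
have [xt|xt] /= := boolP (x \in t).
  by rewrite big1 // => s /and3P[xs /eqP ts _]; rewrite ts !inE eqxx in xt.
have face (s : {set 'I_n}) :
    [&& x \in s, t == s :\ x & vee C (s :\ x) == vee C s]
    = (vee C t <= C x)%VS && (s == x |: t).
  apply/and3P/andP => [[xs /eqP-> ev]|[tx /eqP->]].
    by rewrite -vee_setU1_eq setD1K // eq_sym.
  by rewrite setU1K //; split; rewrite ?setU11 // eq_sym vee_setU1_eq.
under eq_bigl do rewrite face.
case: ifP => _; last by rewrite big_pred0.
by rewrite (big_pred1 (x |: t)) // mulrC.
Qed.

Lemma dD_dD f : dD C (dD C f) = 0.
Proof.
apply/ffunP => t; rewrite [RHS]ffunE dDE.
(* d (d f) t is a sum over ordered pairs of distinct x, y, and the terms of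
   (x, y) and (y, x) cancel. *)
pose F x y := if [&& x \notin t, y \notin t, x != y, (vee C t <= C x)%VS
                   & (vee C t <= C y)%VS]
  then psign (x |: t) x * (psign (y |: (x |: t)) y * f (y |: (x |: t))) else 0.
rewrite -[RHS](@sum_antisym_eq0 _ _ F); last first.
  move=> x y; have [->|xy] := eqVneq x y; first by rewrite /F eqxx !andbF oppr0.
  rewrite /F xy eq_sym xy.
  case: (x \notin t) / boolP => xt; case: (y \notin t) / boolP => yt;
    rewrite /= ?andbF ?oppr0 //.
  case: (vee C t <= C x)%VS; case: (vee C t <= C y)%VS; rewrite /= ?oppr0 //.
  rewrite !mulrA [psign (x |: t) x * _]mulrC -[_ * psign (x |: t) x]opprK.
  by rewrite -psign_swap // setUCA; ring.
rewrite big_mkcond; apply: eq_bigr => x _ /=.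
have [xt|xt] /= := boolP (x \in t).
  by rewrite big1 // => y _; rewrite /F xt.
have [tx|tx] /= := boolP (vee C t <= C x)%VS; last first.
  by rewrite big1 // => y _; rewrite /F xt (negbTE tx) !andbF.
rewrite dDE vee_setU1_id // big_distrr big_mkcond; apply: eq_bigr => y _ /=.
by rewrite /F !inE negb_or xt tx eq_sym; case: (x != y); rewrite ?andbF.
Qed.

Lemma dDB f g : dD C (f - g) = dD C f - dD C g.
Proof.
apply/ffunP => t; rewrite !ffunE -sumrB.
by apply: eq_bigr => s _; rewrite !ffunE mulrBl.
Qed.

Lemma homogB k f g : homog C k f -> homog C k g -> homog C k (f - g).
Proof.
move=> hf hg s; rewrite !ffunE; have [fs0 | /hf //] := eqVneq (f s) 0.
by rewrite fs0 sub0r oppr_eq0 => /hg.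
Qed.

Lemma homog_dD k f : homog C k f -> homog C (k + 1) (dD C f).
Proof.
move=> hf s; rewrite dDE.
have [x /and3P[xs sx /hf]|none] :=
  pickP (fun x => [&& x \notin s, (vee C s <= C x)%VS & f (x |: s) != 0]).
  by rewrite /degD /codimW vee_setU1_id // cardsU1 xs => <- _; lia.
rewrite big1 ?eqxx // => x /andP[xs sx].
by move: (none x); rewrite xs sx /= => /negbFE/eqP->; rewrite mulr0.
Qed.

Section Homotopy.
Variables (u v : 'I_n).
Hypotheses (uv : u != v) (Cuv : (C u <= C v)%VS).

Definition hD f : cochain n :=
  [ffun t : {set 'I_n} =>
     if (u \in t) && (v \in t) then psign t v * f (t :\ v) else 0].

Lemma vee_subv_v t : u \in t -> (vee C t <= C v)%VS.
Proof. by move=> ut; apply: subv_trans Cuv; apply: vee_subv. Qed.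

Lemma homog_hD k f : homog C k f -> homog C (k - 1) (hD f).
Proof.
move=> hf s; rewrite ffunE; case: ifP => [/andP[us vs]|]; last by rewrite eqxx.
rewrite mulf_eq0 negb_or => /andP[_ /hf].
have veeD1 : vee C s = vee C (s :\ v).
  by rewrite -{1}(setD1K vs) vee_setU1_id // vee_subv_v // !inE us uv.
have cardD1 : #|s| = #|s :\ v|.+1 by rewrite -{1}(setD1K vs) cardsU1 !inE eqxx.
rewrite /degD /codimW veeD1 cardD1 => <-.
by rewrite -[#|s :\ v|.+1]addn1 PoszD opprD addrA.
Qed.

Lemma homog_dD_hD k f : homog C k f -> homog C k (dD C (hD f)).
Proof. by move=> /homog_hD/homog_dD; rewrite subrK. Qed.

Lemma hD_avoids f : avoids u f -> hD f = 0.
Proof.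
move=> fu; apply/ffunP => t; rewrite !ffunE.
by case: ifP => // /andP[ut vt]; rewrite fu ?mulr0 // !inE ut uv.
Qed.

Lemma hD_homotopy_notin f t : u \in t -> v \notin t -> f t = dD C (hD f) t.
Proof.
move=> ut vt; rewrite dDE (bigD1 v) /=; last by rewrite vt vee_subv_v.
rewrite big1 ?addr0 => [|x /andP[_ xv]].
  by rewrite ffunE setU11 in_setU1 ut orbT /= setU1K // mulrA psign_sqr mul1r.
rewrite ffunE [v \in _]in_setU1 (negbTE vt) orbF eq_sym (negbTE xv).
by rewrite andbF mulr0.
Qed.

Lemma hD_homotopy_in f t : u \in t -> v \notin t ->
  f (v |: t) = dD C (hD f) (v |: t) + hD (dD C f) (v |: t).
Proof.
move=> ut vt; have uvt : u \in v |: t by rewrite in_setU1 ut orbT.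
rewrite [hD _ _]ffunE uvt setU11 /= setU1K // [dD C f t]dDE.
rewrite (bigD1 v) /=; last by rewrite vt vee_subv_v.
rewrite mulrDr mulrA psign_sqr mul1r addrCA -[LHS]addr0; congr (_ + _).
have notin_vt x : (x \notin v |: t) && (vee C t <= C x)%VS
    = (x \notin t) && (vee C t <= C x)%VS && (x != v).
  by rewrite in_setU1 negb_or -andbA andbC.
rewrite dDE vee_setU1_id ?vee_subv_v // (eq_bigl _ _ notin_vt).
rewrite big_distrr -big_split /=.
apply/esym/big1 => x /andP[/andP[xt tx] xv].
have vxt : v \notin x |: t by rewrite !inE negb_or vt eq_sym xv.
have xvt : x \notin v |: t by rewrite !inE negb_or xt xv.
rewrite ffunE !inE eqxx ut !orbT /= setUCA setU1K //.
rewrite !psign_setU1 // !leqnn (sign_leq_swap _ xv).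
by case: (v <= x)%N => /=; rewrite ?expr0 ?expr1; ring.
Qed.

Lemma hD_homotopy f t : u \in t -> f t = dD C (hD f) t + hD (dD C f) t.
Proof.
move=> ut; have [vt|vt] := boolP (v \in t).
  by rewrite -(setD1K vt) hD_homotopy_in // !inE ?eqxx // ut uv.
by rewrite [X in _ + X]ffunE (negbTE vt) andbF addr0 hD_homotopy_notin.
Qed.

Lemma cocycle_eq_dD_hD z t : dD C z = 0 -> u \in t -> z t = dD C (hD z) t.
Proof.
move=> zd ut; rewrite (hD_homotopy z ut) zd (@hD_avoids 0) => [|s _].
  by rewrite [X in _ + X]ffunE addr0.
by rewrite ffunE.
Qed.

Lemma cocycle_cohomologous_avoiding k z :
  homog C k z -> dD C z = 0 ->
  exists z' (y : cochain n), [/\ homog C k z', avoids u z', dD C z' = 0,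
                                 homog C (k - 1) y & z = z' + dD C y].
Proof.
move=> zk zd; exists (z - dD C (hD z)), (hD z); split.
- by apply: homogB => //; apply: homog_dD_hD.
- by move=> t ut; rewrite ffunBE -cocycle_eq_dD_hD ?subrr.
- by rewrite dDB dD_dD zd subrr.
- exact: homog_hD.
- by rewrite subrK.
Qed.

Lemma coboundary_avoiding k z (y : cochain n) :
  homog C (k - 1) y -> avoids u z -> z = dD C y ->
  exists y' : cochain n, [/\ homog C (k - 1) y', avoids u y' & z = dD C y'].
Proof.
move=> yk zu zy; exists (y - dD C (hD y)); split.
- by apply: homogB => //; apply: homog_dD_hD.
- move=> t ut; rewrite ffunBE (hD_homotopy y ut) -zy (hD_avoids zu).
  by rewrite addrAC subrr add0r ffunE.
- by rewrite dDB dD_dD subr0.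
Qed.

Lemma incl_quasi_iso_subv : incl_quasi_iso C u.
Proof.
move=> k; split=> [z|z _ zu _ [y [yk zy]]].
  exact: cocycle_cohomologous_avoiding.
exact: coboundary_avoiding yk zu zy.
Qed.

End Homotopy.
End DComplexTheory.

Theorem proposition2p1 (R : realType) (W : vectType R[i]) (n : nat)
    (B : 'I_n -> {vspace W}) (B_inj : injective B)
    (u v : 'I_n) (huv : u != v) (hsub : (B u <= B v)%VS) :
  incl_quasi_iso B u.
Proof. exact: (@incl_quasi_iso_subv _ _ _ B u v huv hsub). Qed.
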